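(* Let $f$ be a positive definite function and let $W=\{w_1,\dots,w_N\}\subset V$ be a norming set for $\mathcal{B}_M$. Then for every signal $x\in\mathcal{L}(G)$ its GBF interpolant $\mathrm{I}_W x$ satisfies $$\max_{v\in V}|x(v)-\mathrm{I}_W x(v)|\le\big(1+\|(\mathbf{S}_W\mathbf{B}_M)^{-1}\|\big)\Big(\sum_{k=M+1}^n\hat{f}_k\Big)^{1/2}\|x\|_{K_f}.$$
   Context: Let $G$ be a graph with vertex set $V=\{v_1,\dots,v_n\}$, symmetric non-negative weighted adjacency matrix $\mathbf{A}$, degree matrix $\mathbf{D}=\mathrm{diag}(\sum_k\mathbf{A}_{ik})$ (positive), and normalized Laplacian $\mathbf{L}=\mathbf{I}_n-\mathbf{D}^{-1/2}\mathbf{A}\mathbf{D}^{-1/2}$. Signals are vectors in $\mathcal{L}(G)\cong\mathbb{R}^n$ with euclidean norm and standard basis $e_1,\dots,e_n$. Fix an orthonormal eigendecomposition $\mathbf{L}=\mathbf{U}\,\mathrm{diag}(\lambda_1,\dots,\lambda_n)\mathbf{U}^\intercal$, $\lambda_1\le\dots\le\lambda_n$, with columns $u_1,\dots,u_n$. Fourier transform $\hat{x}=\mathbf{U}^\intercal x$; convolution operator $\mathbf{C}_x=\mathbf{U}\,\mathrm{diag}(\hat{x})\mathbf{U}^\intercal$. For $f\in\mathcal{L}(G)$ let $(\mathbf{K}_f)_{ij}=(\mathbf{C}_{e_j}f)(v_i)$; $f$ is a positive definite function if $\mathbf{K}_f$ is symmetric strictly positive definite; then $\|x\|_{K_f}=\sqrt{x^\intercal\mathbf{K}_f^{-1}x}$.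 For distinct nodes $w_k=v_{j_k}$, $k=1,\dots,N$, let $\mathbf{K}_{f,W}\in\mathbb{R}^{N\times N}$ have entries $(\mathbf{K}_{f,W})_{kl}=(\mathbf{C}_{e_{j_l}}f)(w_k)$ (invertible); the GBF interpolant is $\mathrm{I}_W x=\sum_{k=1}^N c_k\mathbf{C}_{e_{j_k}}f$ where $c$ solves $\mathbf{K}_{f,W}c=(x(w_1),\dots,x(w_N))^\intercal$. Let $\mathcal{B}_M=\mathrm{span}\{u_1,\dots,u_M\}$, $\mathbf{S}_W x(v)=x(v)$ for $v\in W$ and $0$ otherwise, $\mathbf{B}_M x=\sum_{k=1}^M(u_k^\intercal x)u_k$. $W$ is a norming set for $\mathcal{B}_M$ if $\mathbf{S}_W\mathbf{B}_M$ is injective on $\mathcal{B}_M$; $\|(\mathbf{S}_W\mathbf{B}_M)^{-1}\|$ is the operator norm of the inverse of $\mathbf{S}_W\mathbf{B}_M|_{\mathcal{B}_M}$ on its image $\mathbf{S}_W(\mathcal{B}_M)$ with respect to the euclidean norm. *)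

From HB Require Import structures.
From mathcomp Require Import all_boot all_order all_algebra.
From mathcomp Require Import boolp classical_sets reals.
Set Implicit Arguments. Unset Strict Implicit. Unset Printing Implicit Defensive.
Import Order.TTheory GRing.Theory Num.Theory.
Local Open Scope ring_scope.
Local Open Scope classical_set_scope.

Section GBF.
Variables (R : realType) (n : nat).

Definition deg (A : 'M[R]_n) (i : 'I_n) : R := \sum_k A i k.
Definition Dmhalf (A : 'M[R]_n) : 'M[R]_n :=
  diag_mx (\row_i (Num.sqrt (deg A i))^-1).
Definition normLap (A : 'M[R]_n) : 'M[R]_n :=
  1%:M - Dmhalf A *m A *m Dmhalf A.

Definition fourier (U : 'M[R]_n) (x : 'cV[R]_n) : 'cV[R]_n := U^T *m x.
Definition convop (U : 'M[R]_n) (x : 'cV[R]_n) : 'M[R]_n :=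
  U *m diag_mx (fourier U x)^T *m U^T.
Definition evec (j : 'I_n) : 'cV[R]_n := delta_mx j 0.
Definition Kf (U : 'M[R]_n) (f : 'cV[R]_n) : 'M[R]_n :=
  \matrix_(i, j) (convop U (evec j) *m f) i 0.
Definition posdef_fun (U : 'M[R]_n) (f : 'cV[R]_n) : Prop :=
  (Kf U f)^T = Kf U f /\
  forall x : 'cV[R]_n, x != 0 -> 0 < (x^T *m Kf U f *m x) 0 0.
Definition knorm (U : 'M[R]_n) (f x : 'cV[R]_n) : R :=
  Num.sqrt ((x^T *m invmx (Kf U f) *m x) 0 0).
Definition enorm (x : 'cV[R]_n) : R := Num.sqrt (\sum_i x i 0 ^+ 2).

Definition KfW (U : 'M[R]_n) (f : 'cV[R]_n) (N : nat) (w : 'I_N -> 'I_n)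
  : 'M[R]_N := \matrix_(k, l) (convop U (evec (w l)) *m f) (w k) 0.
Definition interp (U : 'M[R]_n) (f : 'cV[R]_n) (N : nat) (w : 'I_N -> 'I_n)
  (x : 'cV[R]_n) : 'cV[R]_n :=
  let c := invmx (KfW U f w) *m (\col_k x (w k) 0) in
  \sum_(k < N) c k 0 *: (convop U (evec (w k)) *m f).

(* B_M = span{u_1,...,u_M} (0-based: columns k with k < M) *)
Definition inBM (U : 'M[R]_n) (M : nat) (y : 'cV[R]_n) : Prop :=
  exists a : 'I_n -> R, y = \sum_(k < n | (k < M)%N) a k *: col k U.
Definition BM (U : 'M[R]_n) (M : nat) (x : 'cV[R]_n) : 'cV[R]_n :=
  \sum_(k < n | (k < M)%N) ((col k U)^T *m x) 0 0 *: col k U.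
Definition SW (N : nat) (w : 'I_N -> 'I_n) (x : 'cV[R]_n) : 'cV[R]_n :=
  \col_v (if v \in codom w then x v 0 else 0).
Definition norming (U : 'M[R]_n) (M N : nat) (w : 'I_N -> 'I_n) : Prop :=
  forall y1 y2, inBM U M y1 -> inBM U M y2 ->
    SW w (BM U M y1) = SW w (BM U M y2) -> y1 = y2.
(* ||(S_W B_M)^{-1}||: operator norm of the inverse on S_W(B_M),
   i.e. sup over nonzero z = S_W B_M y (y in B_M) of ||y|| / ||z||
   (sup of the empty set is 0, the norm of the zero operator) *)
Definition opnorm_inv (U : 'M[R]_n) (M N : nat) (w : 'I_N -> 'I_n) : R :=
  sup [set r : R | exists y : 'cV[R]_n, [/\ inBM U M y,
        SW w (BM U M y) != 0 & r = enorm y / enorm (SW w (BM U M y))]].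

End GBF.

(* The interpolant is the K_f-orthogonal projection onto the span of the
   columns of K_f indexed by W. So the error at v is a^T x for a functional
   a = e_v - E c (E the sampling matrix) with E^T K_f a = 0, and by
   Cauchy-Schwarz (a^T x)^2 <= (a^T K_f a) |x|_{K_f}^2; the orthogonality makes
   a^T K_f a minimal among all e_v - E u. As W is norming, u can be chosen with
   U_M^T (e_v - E u) = 0 and |u| <= |(S_W B_M)^-1|, where U_M holds the first M
   eigenvectors. Since K_f = U diag(f^) U^T, only the coefficients f^_k with
   k >= M (0-based) then survive, and (e_v - E u)^T K_f (e_v - E u) is at most
   (sum_{k>=M} f^_k) (1 + |u|)^2. *)

From HB Require Import structures.
From mathcomp Require Import all_boot all_order all_algebra.
From mathcomp Require Import boolp classical_sets reals.
From mathcomp Require Import ring lra.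
Set Implicit Arguments. Unset Strict Implicit. Unset Printing Implicit Defensive.
Import Order.TTheory GRing.Theory Num.Theory.
Local Open Scope ring_scope.

Lemma widen_ord_inj m n (le_mn : (m <= n)%N) : injective (widen_ord le_mn).
Proof. by move=> i j /(congr1 val) /= ij; apply: val_inj. Qed.

Lemma colsub_orthonormal (R : pzSemiRingType) m n p (g : 'I_p -> 'I_n)
    (A : 'M[R]_(m, n)) :
  injective g -> A^T *m A = 1%:M -> (colsub g A)^T *m colsub g A = 1%:M.
Proof.
move=> g_inj AtA; rewrite trmx_mxsub -mxsub_mul AtA.
by apply/matrixP => i j; rewrite !mxE (inj_eq g_inj).
Qed.

Lemma trmx_colsub1_mul (R : pzSemiRingType) m n p (g : 'I_p -> 'I_m)
    (A : 'M[R]_(m, n)) :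
  (colsub g 1%:M)^T *m A = rowsub g A.
Proof. by rewrite trmx_mxsub trmx1 -rowsubE. Qed.

Lemma mulmx_colsub1 (R : pzSemiRingType) m n p (g : 'I_p -> 'I_n)
    (A : 'M[R]_(m, n)) :
  A *m colsub g 1%:M = colsub g A.
Proof. by rewrite mulmx_colsub mulmx1. Qed.

Lemma orthonormal_ker (R : pzSemiRingType) m n (A : 'M[R]_(m, n)) (x : 'cV_n) :
  A^T *m A = 1%:M -> A *m x = 0 -> x = 0.
Proof. by move=> AtA Ax0; rewrite -[x]mul1mx -AtA -mulmxA Ax0 mulmx0. Qed.

Lemma unitmx_ker (R : fieldType) m (A : 'M[R]_m) :
  (forall x : 'cV_m, A *m x = 0 -> x = 0) -> A \in unitmx.
Proof.
move=> A_inj; rewrite -unitmx_tr -row_free_unit -kermx_eq0.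
apply/eqP/row_matrixP => i; rewrite row0; apply: trmx_inj; rewrite trmx0.
by apply: A_inj; rewrite -{1}[A]trmxK -trmx_mul -row_mul mulmx_ker row0 trmx0.
Qed.

Lemma mxDE (R : nmodType) m n (A B : 'M[R]_(m, n)) i j :
  (A + B) i j = A i j + B i j.
Proof. by rewrite mxE. Qed.

Lemma mxBE (R : zmodType) m n (A B : 'M[R]_(m, n)) i j :
  (A - B) i j = A i j - B i j.
Proof. by rewrite !mxE. Qed.

Lemma trmxD (R : nmodType) m n (A B : 'M[R]_(m, n)) : (A + B)^T = A^T + B^T.
Proof. by apply/matrixP => i j; rewrite !mxE. Qed.

Lemma trmxB (R : zmodType) m n (A B : 'M[R]_(m, n)) : (A - B)^T = A^T - B^T.
Proof. by apply/matrixP => i j; rewrite !mxE. Qed.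

Lemma delta_trmx_mul (R : pzSemiRingType) m (x : 'cV[R]_m) (v : 'I_m) :
  ((delta_mx v 0 : 'cV_m)^T *m x) 0 0 = x v 0.
Proof. by rewrite trmx_delta -rowE mxE. Qed.

Lemma mx11_trmx (R : Type) (a : 'M[R]_1) : a^T 0 0 = a 0 0.
Proof. by rewrite mxE. Qed.

Lemma trmx_mul_delta (R : comPzSemiRingType) m (x : 'cV[R]_m) (v : 'I_m) :
  (x^T *m (delta_mx v 0 : 'cV_m)) 0 0 = x v 0.
Proof. by rewrite -mx11_trmx trmx_mul trmxK delta_trmx_mul. Qed.

Definition bform {R : pzSemiRingType} {m : nat} (K : 'M[R]_m) (x y : 'cV[R]_m) : R :=
  (x^T *m K *m y) 0 0.

Definition posdefmx {R : numDomainType} {m : nat} (K : 'M[R]_m) : Prop :=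
  K^T = K /\ forall x : 'cV[R]_m, x != 0 -> 0 < bform K x x.

Section PositiveDefinite.
Variables (R : realFieldType) (m : nat) (K : 'M[R]_m).
Hypothesis K_pd : posdefmx K.

Let K_sym : K^T = K. Proof. by case: K_pd. Qed.

Lemma bformC x y : bform K x y = bform K y x.
Proof. by rewrite /bform -mx11_trmx !trmx_mul trmxK K_sym mulmxA. Qed.

Lemma posdef_ge0 x : 0 <= bform K x x.
Proof.
have [->|x0] := eqVneq x 0; last by rewrite ltW //; case: K_pd => _; apply.
by rewrite /bform mulmx0 mxE.
Qed.

Lemma posdef_eq0 x : bform K x x = 0 -> x = 0.
Proof.
by apply: contra_eq => x0; rewrite gt_eqF //; case: K_pd => _; apply.
Qed.

Lemma posdef_unit : K \in unitmx.
Proof.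
by apply: unitmx_ker => x Kx0; apply: posdef_eq0; rewrite /bform -mulmxA Kx0 mulmx0 mxE.
Qed.

Lemma bform_subZ x y t :
  bform K (x - t *: y) (x - t *: y)
    = bform K x x - 2 * t * bform K x y + t ^+ 2 * bform K y y.
Proof.
have -> : bform K (x - t *: y) (x - t *: y)
    = bform K x x - t * bform K x y - t * bform K y x + t ^+ 2 * bform K y y.
  rewrite /bform trmxB linearZ /= !mulmxBl !mulmxBr -!scalemxAl -!scalemxAr.
  by rewrite !mxBE !mxE; ring.
by rewrite [bform K y x]bformC; ring.
Qed.

Lemma posdef_CauchySchwarz x y : bform K x y ^+ 2 <= bform K x x * bform K y y.
Proof.
have [->|y0] := eqVneq y 0; first by rewrite /bform !mulmx0 !mxE expr0n mulr0.
have c_gt0 : 0 < bform K y y by case: K_pd => _; apply.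
have := posdef_ge0 (x - (bform K x y / bform K y y) *: y).
rewrite bform_subZ.
have -> : bform K x x - 2 * (bform K x y / bform K y y) * bform K x y
    + (bform K x y / bform K y y) ^+ 2 * bform K y y
    = bform K x x - bform K x y ^+ 2 / bform K y y.
  by field; rewrite gt_eqF.
by rewrite subr_ge0 ler_pdivrMr.
Qed.

Lemma trmx_invmx_posdef : (invmx K)^T = invmx K.
Proof. by rewrite trmx_inv K_sym. Qed.

Lemma bform_invmx c : bform (invmx K) c c = bform K (invmx K *m c) (invmx K *m c).
Proof.
rewrite /bform trmx_mul trmx_invmx_posdef -!mulmxA (mulmxA K) mulmxV ?posdef_unit //.
by rewrite mul1mx.
Qed.

Lemma posdef_invmx_ge0 c : 0 <= bform (invmx K) c c.
Proof. by rewrite bform_invmx posdef_ge0. Qed.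

Lemma posdef_CauchySchwarz_inv a c :
  (a^T *m c) 0 0 ^+ 2 <= bform K a a * bform (invmx K) c c.
Proof.
have -> : (a^T *m c) 0 0 = bform K a (invmx K *m c).
  by rewrite /bform -mulmxA (mulmxA K) mulmxV ?posdef_unit // mul1mx.
by rewrite bform_invmx posdef_CauchySchwarz.
Qed.

Lemma posdef_congr N (E : 'M[R]_(m, N)) :
  (forall u : 'cV_N, E *m u = 0 -> u = 0) -> posdefmx (E^T *m K *m E).
Proof.
move=> E_inj; split; first by rewrite !trmx_mul trmxK K_sym mulmxA.
move=> u u0; have Eu0 : E *m u != 0 by apply: contra_neq u0; apply: E_inj.
have -> : bform (E^T *m K *m E) u u = bform K (E *m u) (E *m u).
  by rewrite /bform trmx_mul !mulmxA.
by case: K_pd => _; apply.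
Qed.

Lemma posdef_orth_le N (E : 'M[R]_(m, N)) (a : 'cV_m) (s : 'cV_N) :
  E^T *m K *m a = 0 -> bform K a a <= bform K (a + E *m s) (a + E *m s).
Proof.
move=> EKa; set b := E *m s.
have ab : bform K b a = 0 by rewrite /bform /b trmx_mul -!mulmxA (mulmxA E^T) EKa !mulmx0 mxE.
have -> : bform K (a + b) (a + b) = bform K a a + bform K a b + bform K b a + bform K b b.
  by rewrite /bform trmxD !mulmxDl !mulmxDr !mxDE addrA.
by rewrite [bform K a b]bformC ab !addr0 lerDl posdef_ge0.
Qed.

End PositiveDefinite.

Section KernelInterpolation.
Variables (R : realFieldType) (m : nat) (K : 'M[R]_m).
Hypothesis K_pd : posdefmx K.
Variables (N : nat) (E : 'M[R]_(m, N)).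
Hypothesis E_inj : forall u : 'cV_N, E *m u = 0 -> u = 0.
Let G := E^T *m K *m E.

Let G_pd : posdefmx G. Proof. exact: posdef_congr. Qed.
Let K_sym : K^T = K. Proof. by case: K_pd. Qed.
Let G_sym : G^T = G. Proof. by case: G_pd. Qed.

Lemma kernel_interp_error (x : 'cV_m) (v : 'I_m) (u : 'cV_N) :
  ((x - K *m E *m (invmx G *m (E^T *m x))) v 0) ^+ 2
    <= bform K (delta_mx v 0 - E *m u) (delta_mx v 0 - E *m u) * bform (invmx K) x x.
Proof.
set ev : 'cV_m := delta_mx v 0.
set a := ev - E *m (invmx G *m (E^T *m (K *m ev))).
have err : (x - K *m E *m (invmx G *m (E^T *m x))) v 0 = (a^T *m x) 0 0.
  rewrite -[LHS]delta_trmx_mul trmxB mulmxBr mulmxBl; congr (fun_of_matrix (_ - _) 0 0).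
  by rewrite !trmx_mul trmxK trmx_inv G_sym K_sym !mulmxA.
have EKa : E^T *m K *m a = 0.
  by rewrite mulmxBr !mulmxA -/G (mulmxV (posdef_unit G_pd)) mul1mx subrr.
have a_opt : bform K a a <= bform K (ev - E *m u) (ev - E *m u).
  have -> : ev - E *m u = a + E *m (invmx G *m (E^T *m (K *m ev)) - u).
    by rewrite mulmxBr addrA subrK.
  exact: posdef_orth_le.
rewrite err; apply: le_trans (posdef_CauchySchwarz_inv K_pd a x) _.
by rewrite ler_wpM2r ?(posdef_invmx_ge0 K_pd).
Qed.

End KernelInterpolation.

Section EuclideanNorm.
Variable R : realType.

Lemma enorm_ge0 m (z : 'cV[R]_m) : 0 <= enorm z.
Proof. exact: sqrtr_ge0. Qed.

Lemma trmx_mul_self m (z : 'cV[R]_m) : (z^T *m z) 0 0 = \sum_i z i 0 ^+ 2.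
Proof. by rewrite mxE; apply: eq_bigr => i _; rewrite mxE expr2. Qed.

Lemma enorm_sqr m (z : 'cV[R]_m) : enorm z ^+ 2 = (z^T *m z) 0 0.
Proof.
by rewrite trmx_mul_self sqr_sqrtr // sumr_ge0 // => i _; rewrite sqr_ge0.
Qed.

Lemma enorm0 m : enorm (0 : 'cV[R]_m) = 0.
Proof. by rewrite /enorm big1 ?sqrtr0 // => i _; rewrite mxE expr0n. Qed.

Lemma enorm_eq0 m (z : 'cV[R]_m) : enorm z = 0 -> z = 0.
Proof.
move=> /eqP; rewrite sqrtr_eq0 => sum_le0.
have sq_ge0 i : true -> 0 <= z i 0 ^+ 2 by rewrite sqr_ge0.
have /psumr_eq0P z0 : \sum_i z i 0 ^+ 2 = 0.
  by apply/eqP; rewrite eq_le sum_le0 sumr_ge0.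
by apply/matrixP => i j; rewrite (ord1 j) mxE; apply/eqP; rewrite -sqrf_eq0 z0.
Qed.

Lemma enorm_coord_le m (z : 'cV[R]_m) i : `|z i 0| <= enorm z.
Proof.
rewrite -sqrtr_sqr; apply: ler_wsqrtr.
by rewrite (bigD1 i) //= lerDl sumr_ge0 // => j _; rewrite sqr_ge0.
Qed.

Lemma enorm_isometry m p (A : 'M[R]_(p, m)) z :
  A^T *m A = 1%:M -> enorm (A *m z) = enorm z.
Proof.
move=> AtA; rewrite /enorm -!trmx_mul_self trmx_mul mulmxA -(mulmxA z^T) AtA.
by rewrite mulmx1.
Qed.

Lemma sqr_enorm_delta_sub_le m (v : 'I_m) (q : 'cV[R]_m) :
  enorm (delta_mx v 0 - q) ^+ 2 <= (1 + enorm q) ^+ 2.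
Proof.
have qv : `|q v 0| <= enorm q := enorm_coord_le q v.
have -> : enorm (delta_mx v 0 - q) ^+ 2 = 1 - 2 * q v 0 + enorm q ^+ 2.
  rewrite !enorm_sqr trmxB !mulmxBl !mulmxBr !mxBE delta_trmx_mul trmx_mul_delta.
  by rewrite delta_trmx_mul mxE !eqxx /=; ring.
move: qv; rewrite ler_norml => /andP[qv_ge _]; nra.
Qed.

Definition mxbound m p (T : 'M[R]_(m, p)) : R :=
  Num.sqrt (\sum_i (\sum_j `|T i j|) ^+ 2).

Lemma enorm_mulmx_le m p (T : 'M[R]_(m, p)) z :
  enorm (T *m z) <= mxbound T * enorm z.
Proof.
rewrite /enorm /mxbound -sqrtrM ?sumr_ge0 // => [|i _]; last exact: sqr_ge0.
apply: ler_wsqrtr; rewrite mulr_suml; apply: ler_sum => i _.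
have coord_le : `|(T *m z) i 0| <= (\sum_j `|T i j|) * enorm z.
  rewrite mxE mulr_suml; apply: le_trans (ler_norm_sum _ _ _) _.
  by apply: ler_sum => j _; rewrite normrM ler_wpM2l // enorm_coord_le.
rewrite -real_normK ?num_real //.
have := ler_pM (normr_ge0 _) (normr_ge0 _) coord_le coord_le.
by rewrite -!expr2 exprMn enorm_sqr trmx_mul_self.
Qed.

Lemma gram_unitmx m p (H : 'M[R]_(m, p)) :
  (forall g : 'cV_p, H *m g = 0 -> g = 0) -> H^T *m H \in unitmx.
Proof.
move=> H_inj; apply: unitmx_ker => g Qg0; apply: H_inj; apply: enorm_eq0; apply/eqP.
by rewrite -sqrf_eq0 enorm_sqr trmx_mul -mulmxA (mulmxA H^T) Qg0 mulmx0 mxE.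
Qed.

Lemma enorm_ker_lbound m p (H : 'M[R]_(m, p)) :
  (forall g : 'cV_p, H *m g = 0 -> g = 0) ->
  exists c, forall g, enorm g <= c * enorm (H *m g).
Proof.
move=> /gram_unitmx Q_unit; exists (mxbound (invmx (H^T *m H) *m H^T)) => g.
have {1}-> : g = invmx (H^T *m H) *m H^T *m (H *m g).
  by rewrite !mulmxA -(mulmxA _ H^T) (mulVmx Q_unit) mul1mx.
exact: enorm_mulmx_le.
Qed.

End EuclideanNorm.

Section GraphBasisFunctions.
Variables (R : realType) (n : nat) (U : 'M[R]_n) (f : 'cV[R]_n).
Hypothesis U_orth : U^T *m U = 1%:M.
Hypothesis f_pd : posdef_fun U f.

Let K := Kf U f.

Let K_pd : posdefmx K. Proof. exact: f_pd. Qed.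

Lemma Kf_spectral : K = U *m diag_mx (fourier U f)^T *m U^T.
Proof.
apply/matrixP => i j.
have -> : (U *m diag_mx (fourier U f)^T *m U^T) i j
    = (U *m diag_mx (fourier U f)^T *m U^T *m evec R j) i 0.
  by rewrite /evec -colE [RHS]mxE.
rewrite /K /Kf mxE /convop /fourier -!mulmxA; congr ((U *m _) i 0).
by apply/matrixP => k l; rewrite (ord1 l) !mul_diag_mx !mxE mulrC.
Qed.

Lemma bform_Kf b : bform K b b = \sum_k fourier U f k 0 * (U^T *m b) k 0 ^+ 2.
Proof.
rewrite /bform Kf_spectral.
have -> : b^T *m (U *m diag_mx (fourier U f)^T *m U^T) *m b
    = (U^T *m b)^T *m diag_mx (fourier U f)^T *m (U^T *m b).
  by rewrite [(U^T *m b)^T]trmx_mul trmxK !mulmxA.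
rewrite mul_mx_diag mxE; apply: eq_bigr => k _; rewrite !mxE; ring.
Qed.

Lemma fourier_gt0 k : 0 < fourier U f k 0.
Proof.
pose e : 'cV[R]_n := delta_mx k 0.
have Ue : U^T *m (U *m e) = e by rewrite mulmxA U_orth mul1mx.
have Ue_neq0 : U *m e != 0.
  apply/eqP => Ue0; move: Ue; rewrite Ue0 mulmx0 => /matrixP/(_ k 0).
  by rewrite !mxE !eqxx => /eqP; rewrite eq_sym oner_eq0.
have := proj2 K_pd _ Ue_neq0; rewrite bform_Kf Ue (bigD1 k) //= big1 ?addr0.
  by rewrite !mxE !eqxx expr1n mulr1.
by move=> j /negbTE jk; rewrite !mxE jk expr0n mulr0.
Qed.

Variables (N : nat) (w : 'I_N -> 'I_n).
Hypothesis w_inj : injective w.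

Let E : 'M[R]_(n, N) := colsub w 1%:M.

Lemma sampling_orthonormal : E^T *m E = 1%:M.
Proof. by apply: colsub_orthonormal; rewrite ?trmx1 ?mulmx1. Qed.

Lemma KfW_colsub : KfW U f w = E^T *m K *m E.
Proof.
by rewrite mulmx_colsub1 trmx_colsub1_mul; apply/matrixP => k l; rewrite !mxE.
Qed.

Lemma interp_colsub x : interp U f w x = K *m E *m (invmx (KfW U f w) *m (E^T *m x)).
Proof.
have -> : E^T *m x = \col_k x (w k) 0.
  by rewrite trmx_colsub1_mul; apply/matrixP => k l; rewrite (ord1 l) !mxE.
apply/matrixP => i l; rewrite (ord1 l) /interp summxE mulmx_colsub1 mxE.
by apply: eq_bigr => k _; rewrite !mxE mulrC.
Qed.

Lemma SW_colsub y : SW w y = E *m (E^T *m y).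
Proof.
rewrite trmx_colsub1_mul; apply/matrixP => i l; rewrite (ord1 l) !mxE.
case: (boolP (i \in codom w)) => [/codomP [k ->] | i_notin].
  rewrite (bigD1 k) //= !mxE eqxx mul1r big1 ?addr0 // => j jk.
  by rewrite !mxE (inj_eq w_inj) eq_sym (negbTE jk) mul0r.
rewrite big1 // => j _; rewrite !mxE.
by case: eqP => [ij | _]; [rewrite ij codom_f in i_notin | rewrite mul0r].
Qed.

Lemma interp_error_sqr_le (x : 'cV_n) (v : 'I_n) (u : 'cV_N) :
  (x v 0 - interp U f w x v 0) ^+ 2
    <= bform K (delta_mx v 0 - E *m u) (delta_mx v 0 - E *m u) * knorm U f x ^+ 2.
Proof.
rewrite -mxBE interp_colsub KfW_colsub /knorm sqr_sqrtr ?(posdef_invmx_ge0 K_pd) //.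
apply: kernel_interp_error => // u' Eu'0.
exact: orthonormal_ker sampling_orthonormal Eu'0.
Qed.

Variable M : nat.
Hypothesis leMn : (M <= n)%N.
Hypothesis W_norming : norming U M w.

Let UM : 'M[R]_(n, M) := colsub (widen_ord leMn) U.
Let H := E^T *m UM.

Lemma first_cols_orthonormal : UM^T *m UM = 1%:M.
Proof. by apply: colsub_orthonormal => //; apply: widen_ord_inj. Qed.

Lemma sum_first_cols (a : 'I_n -> R) :
  \sum_(k < n | (k < M)%N) a k *: col k U = UM *m \col_j a (widen_ord leMn j).
Proof.
rewrite (big_ord_narrow leMn); apply/matrixP => i l; rewrite (ord1 l) summxE !mxE.
by apply: eq_bigr => j _; rewrite !mxE mulrC.
Qed.

Lemma BM_colsub (y : 'cV_n) : BM U M y = UM *m (UM^T *m y).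
Proof.
rewrite /BM sum_first_cols; congr (UM *m _); apply/matrixP => j l.
by rewrite (ord1 l) !mxE; apply: eq_bigr => k _; rewrite !mxE.
Qed.

Lemma BM_first_cols (g : 'cV_M) : BM U M (UM *m g) = UM *m g.
Proof. by rewrite BM_colsub [UM^T *m _]mulmxA first_cols_orthonormal mul1mx. Qed.

Lemma inBM_first_colsP (y : 'cV_n) : inBM U M y <-> exists g, y = UM *m g.
Proof.
split => [[a ->] | [g ->]]; first by eexists; rewrite sum_first_cols.
by exists (fun k => ((col k U)^T *m (UM *m g)) 0 0); rewrite -[RHS]/(BM U M _) BM_first_cols.
Qed.

Lemma enorm_SW_BM (g : 'cV_M) : enorm (SW w (BM U M (UM *m g))) = enorm (H *m g).
Proof. by rewrite BM_first_cols SW_colsub enorm_isometry ?sampling_orthonormal // mulmxA. Qed.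

Lemma sampled_first_cols_inj (g : 'cV_M) : H *m g = 0 -> g = 0.
Proof.
move=> Hg0; apply: (orthonormal_ker first_cols_orthonormal).
have -> : UM *m g = UM *m 0.
  apply: W_norming; try by apply/inBM_first_colsP; eexists.
  by rewrite !BM_first_cols !SW_colsub !mulmx0 [E^T *m _]mulmxA -/H Hg0 mulmx0.
by rewrite mulmx0.
Qed.

Let ratios := [set r : R | exists y : 'cV[R]_n, [/\ inBM U M y,
  SW w (BM U M y) != 0 & r = enorm y / enorm (SW w (BM U M y))]]%classic.

Let ratios_ubound : has_ubound ratios.
Proof.
have [c c_lb] := enorm_ker_lbound sampled_first_cols_inj.
exists c => _ [_ [/inBM_first_colsP [g ->] SW_neq0 ->]].
have : enorm (SW w (BM U M (UM *m g))) != 0.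
  by apply: contra_neq SW_neq0; apply: enorm_eq0.
rewrite enorm_SW_BM (enorm_isometry g first_cols_orthonormal) => Hg_neq0.
by rewrite ler_pdivrMr ?c_lb // lt_def Hg_neq0 enorm_ge0.
Qed.

Lemma ratio_le_opnorm_inv (y : 'cV_n) : inBM U M y -> SW w (BM U M y) != 0 ->
  enorm y / enorm (SW w (BM U M y)) <= opnorm_inv U M w.
Proof. by move=> yB SW_neq0; apply: (ub_le_sup ratios_ubound); exists y. Qed.

Lemma opnorm_inv_ge0 : 0 <= opnorm_inv U M w.
Proof.
have [[r ratio_r] | no_ratio] := pselect (exists r, ratios r).
  apply: le_trans (ub_le_sup ratios_ubound ratio_r).
  by case: ratio_r => y [_ _ ->]; rewrite divr_ge0 ?enorm_ge0.
rewrite /opnorm_inv -/ratios (_ : ratios = set0%classic) ?sup0 //.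
by apply/seteqP; split => // r ratio_r; apply: no_ratio; exists r.
Qed.

Lemma bform_Kf_tail (b : 'cV_n) : UM^T *m b = 0 ->
  bform K b b <= (\sum_(k < n | (M <= k)%N) fourier U f k 0) * enorm b ^+ 2.
Proof.
rewrite trmx_mxsub mul_rowsub_mx => UMb0.
have low (k : 'I_n) : (k < M)%N -> (U^T *m b) k 0 = 0.
  move=> kM; have := congr1 (fun c : 'cV_M => c (Ordinal kM) 0) UMb0; rewrite /= !mxE.
  by have -> : widen_ord leMn (Ordinal kM) = k by apply: val_inj.
rewrite bform_Kf (bigID (fun k : 'I_n => (M <= k)%N)) /= [X in _ + X]big1 ?addr0.
  rewrite mulr_suml; apply: ler_sum => k _; apply: ler_wpM2l; first exact/ltW/fourier_gt0.
  rewrite -(enorm_isometry b (_ : U^T^T *m U^T = 1%:M)); last by rewrite trmxK mulmx1C.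
  rewrite -real_normK ?num_real // ler_sqr ?nnegrE ?enorm_ge0 //.
  exact: enorm_coord_le.
by move=> k; rewrite -ltnNge => /low ->; rewrite expr2 !mulr0.
Qed.

Lemma sample_weights (v : 'I_n) : exists u : 'cV_N,
  UM^T *m (delta_mx v 0 - E *m u) = 0 /\ enorm u <= opnorm_inv U M w.
Proof.
(* u samples y := U_M (H^T H)^-1 U_M^T e_v in B_M, and
   |u|^2 = y(v) <= |y| <= |(S_W B_M)^-1| |u|. *)
set ev : 'cV_n := delta_mx v 0; set Q := H^T *m H.
have Q_unit : Q \in unitmx := gram_unitmx sampled_first_cols_inj.
set z := invmx Q *m (UM^T *m ev); set y := UM *m z.
have Qz : Q *m z = UM^T *m ev by rewrite mulKVmx.
have UMtE : UM^T *m E = H^T by rewrite trmx_mul trmxK.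
exists (H *m z); split.
  by rewrite mulmxBr (mulmxA UM^T E) UMtE mulmxA Qz subrr.
have u_sqr : enorm (H *m z) ^+ 2 = y v 0.
  rewrite enorm_sqr trmx_mul -mulmxA (mulmxA H^T) -/Q Qz mulmxA -trmx_mul.
  exact: trmx_mul_delta.
have [-> | u_neq0] := eqVneq (H *m z) 0; first by rewrite enorm0 opnorm_inv_ge0.
have SW_y : enorm (SW w (BM U M y)) = enorm (H *m z) by rewrite enorm_SW_BM.
have SW_neq0 : SW w (BM U M y) != 0.
  by apply: contra_neq u_neq0 => SW0; apply: enorm_eq0; rewrite -SW_y SW0 enorm0.
have u_gt0 : 0 < enorm (H *m z).
  by rewrite lt_def enorm_ge0 andbT; apply: contra_neq u_neq0; apply: enorm_eq0.
have y_in : inBM U M y by apply/inBM_first_colsP; exists z.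
have := ratio_le_opnorm_inv y_in SW_neq0.
rewrite SW_y ler_pdivrMr // => y_le.
rewrite -(ler_pM2r u_gt0) -expr2 u_sqr.
exact: le_trans (ler_norm _) (le_trans (enorm_coord_le y v) y_le).
Qed.

Lemma interp_error_le (x : 'cV_n) (v : 'I_n) :
  `|x v 0 - interp U f w x v 0|
    <= (1 + opnorm_inv U M w)
       * Num.sqrt (\sum_(k < n | (M <= k)%N) fourier U f k 0) * knorm U f x.
Proof.
set S := \sum_(k < n | _) _; set op := opnorm_inv U M w.
have S_ge0 : 0 <= S by apply: sumr_ge0 => k _; apply/ltW/fourier_gt0.
have op_ge0 : 0 <= op := opnorm_inv_ge0.
have [u [UMb0 u_le]] := sample_weights v.
have near_ev := sqr_enorm_delta_sub_le v (E *m u).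
rewrite enorm_isometry ?sampling_orthonormal // in near_ev.
rewrite -ler_sqr ?nnegrE ?normr_ge0 ?mulr_ge0 ?sqrtr_ge0 ?addr_ge0 //.
rewrite real_normK ?num_real //; apply: le_trans (interp_error_sqr_le x v u) _.
rewrite !exprMn [Num.sqrt S ^+ 2]sqr_sqrtr //; apply: ler_wpM2r; first exact: sqr_ge0.
rewrite mulrC; apply: le_trans (bform_Kf_tail UMb0) _; apply: ler_wpM2l => //.
apply: le_trans near_ev _.
by rewrite ler_sqr ?nnegrE ?addr_ge0 ?enorm_ge0 // lerD2l.
Qed.

End GraphBasisFunctions.

Theorem theorem7 (R : realType) (n : nat) (A : 'M[R]_n)
  (U : 'M[R]_n) (lam : 'I_n -> R) (f : 'cV[R]_n)
  (M N : nat) (w : 'I_N -> 'I_n) (x : 'cV[R]_n) :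
  A^T = A ->
  (forall i j, 0 <= A i j) ->
  (forall i, 0 < deg A i) ->
  U^T *m U = 1%:M ->
  (forall i j : 'I_n, (i <= j)%N -> lam i <= lam j) ->
  normLap A = U *m diag_mx (\row_i lam i) *m U^T ->
  posdef_fun U f ->
  injective w ->
  (M <= n)%N ->
  norming U M w ->
  \big[Num.max/0]_(v < n) `|x v 0 - interp U f w x v 0|
    <= (1 + opnorm_inv U M w)
       * Num.sqrt (\sum_(k < n | (M <= k)%N) fourier U f k 0)
       * knorm U f x.
Proof.
move=> _ _ _ U_orth _ _ f_pd w_inj leMn W_norming.
apply: bigmax_le => [|v _]; last exact: interp_error_le.
by rewrite !mulr_ge0 ?sqrtr_ge0 ?addr_ge0 ?(opnorm_inv_ge0 U_orth w_inj leMn W_norming).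
Qed.
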